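(* A well-founded reduced order $(S,<_S)$ is tame if and only if it embeds into $(R_\lambda,<_{R_\lambda})$ for some ordinal $\lambda$. Moreover, in that case the minimal ordinal $\lambda$ such that $(S,<_S)$ embeds into $R_\lambda$ is $\lambda=\mathrm{tamerank}(S,<_S)$, and $\mathrm{tamerank}(S,<_S)<|S|^+$.
   Context: An order $(S,<_S)$ is a set with a strict partial order (antisymmetric, transitive). An embedding of $(S,<_S)$ into $(R,<_R)$ is an injection $\pi$ with $x<_S y\iff \pi(x)<_R\pi(y)$. For an ordinal $\lambda$, $R_\lambda=\{(\alpha,\beta)\in\lambda^2\mid \alpha\leq\beta\}$ with $(\alpha,\beta)<_{R_\lambda}(\alpha',\beta')\iff \beta<\alpha'$. $R_{2,2}$ is the order on $\{x_0,x_1,y_0,y_1\}$ whose only relations are $x_0<y_0$, $x_1<y_1$. $S_{\omega,2}$ is the order on $\{x_n\}_{n<\omega}\uplus\{y_n\}_{n<\omega}$ whose relations are exactly $x_m<y_n$ for $m\geq n$. An order is tame if it embeds neither $R_{2,2}$ nor $S_{\omega,2}$. For $x\in S$: $d(x)=\{z\mid z<_S x\}$, $u(x)=\{z\mid x<_S z\}$, $\mathrm{cu}(x)=S\setminus u(x)$, $\mathrm{CU}(S)=\{\mathrm{cu}(x)\mid x\in S\}$. $S$ is reduced if there are no distinct $x,y\in S$ with $(d(x),u(x))=(d(y),u(y))$. For a tame well-founded order, $(\mathrm{CU}(S),\subsetneq)$ is a well-order and $\mathrm{tamerank}(S,<_S)$ is its order type. *)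

From Stdlib Require Import Arith.

Definition strict_order {S : Type} (lt : S -> S -> Prop) : Prop :=
  (forall x, ~ lt x x) /\ (forall x y z, lt x y -> lt y z -> lt x z).

Definition embedding {S T : Type} (ltS : S -> S -> Prop) (ltT : T -> T -> Prop)
  (f : S -> T) : Prop :=
  (forall x y, f x = f y -> x = y) /\ (forall x y, ltS x y <-> ltT (f x) (f y)).

Definition embeds {S T : Type} (ltS : S -> S -> Prop) (ltT : T -> T -> Prop) : Prop :=
  exists f : S -> T, embedding ltS ltT f.

(* Ordinals are represented by (strict) well-ordered types. *)
Definition well_order {W : Type} (r : W -> W -> Prop) : Prop :=
  (forall a, ~ r a a) /\ (forall a b c, r a b -> r b c -> r a c) /\
  (forall a b, r a b \/ a = b \/ r b a) /\ well_founded r.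

(* Ordinal comparison: (A,rA) <= (B,rB) iff (A,rA) is isomorphic to an
   initial segment of (B,rB). *)
Definition ord_le {A B : Type} (rA : A -> A -> Prop) (rB : B -> B -> Prop) : Prop :=
  exists f : A -> B,
    (forall a a', rA a a' <-> rB (f a) (f a')) /\
    (forall a b, rB b (f a) -> exists a', f a' = b).

Definition Rl_carrier {W : Type} (ltW : W -> W -> Prop) : Type :=
  { p : W * W | ~ ltW (snd p) (fst p) }.

Definition Rl_lt {W : Type} (ltW : W -> W -> Prop)
  (p q : Rl_carrier ltW) : Prop :=
  ltW (snd (proj1_sig p)) (fst (proj1_sig q)).

(* R_{2,2}: x_i = (false, i), y_i = (true, i); only x_i < y_i. *)
Definition R22_lt (p q : bool * bool) : Prop :=
  fst p = false /\ fst q = true /\ snd p = snd q.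

(* S_{omega,2}: x_n = (false, n), y_n = (true, n); x_m < y_n iff m >= n. *)
Definition Somega2_lt (p q : bool * nat) : Prop :=
  fst p = false /\ fst q = true /\ snd q <= snd p.

Definition tame {S : Type} (lt : S -> S -> Prop) : Prop :=
  ~ embeds R22_lt lt /\ ~ embeds Somega2_lt lt.

Definition reduced {S : Type} (lt : S -> S -> Prop) : Prop :=
  forall x y, (forall z, lt z x <-> lt z y) -> (forall z, lt x z <-> lt y z) -> x = y.

Definition cu {S : Type} (lt : S -> S -> Prop) (x : S) : S -> Prop :=
  fun z => ~ lt x z.

Definition CU {S : Type} (lt : S -> S -> Prop) : Type :=
  { A : S -> Prop | exists x, A = cu lt x }.

Definition CU_lt {S : Type} (lt : S -> S -> Prop) (A B : CU lt) : Prop :=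
  (forall z, proj1_sig A z -> proj1_sig B z) /\
  ~ (forall z, proj1_sig B z -> proj1_sig A z).

From Stdlib Require Import Arith Lia Classical ClassicalEpsilon
  FunctionalExtensionality PropExtensionality.

(* In R_λ a copy of R_{2,2} would force b_0 < b_1 < b_0 among the second coordinates
   of the x_i, and a copy of S_{ω,2} would make the second coordinates of the x_n
   strictly decreasing; so R_λ, and everything embedding into it, is tame.
   Conversely, in a tame order the up-sets u(x) are linearly ordered by inclusion
   (two incomparable ones span a copy of R_{2,2}) and admit no strictly increasing
   ω-chain (well-foundedness lets one thin such a chain, and witnesses of its strict
   steps, to antichains realizing S_{ω,2}); hence CU(S) is a well-order.  Sending y
   to (least C ∈ CU(S) with y ∈ C, cu(y)) reflects the order, hence embeds the reduced
   order S into R_{CU(S)}.  Any embedding e into R_λ makes cu(x) ↦ snd (e x) strictly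
   increasing, so CU(S) is at most λ; finally x ↦ cu(x) maps S onto CU(S). *)

Section WellFounded.

Variables (T : Type) (r : T -> T -> Prop).

Lemma wf_exists_min (P : T -> Prop) :
  well_founded r -> (exists x, P x) -> exists m, P m /\ forall y, P y -> ~ r y m.
Proof.
  intros wf [x Px]. apply NNPP; intro no_min.
  assert (notP : forall y, Acc r y -> ~ P y).
  { intros y Hy. induction Hy as [y _ IH]. intro Py.
    apply no_min. exists y. split; [exact Py|]. intros z Pz zy. exact (IH z zy Pz). }
  exact (notP x (wf x) Px).
Qed.

Lemma wf_no_descending_seq (s : nat -> T) :
  well_founded r -> ~ (forall n, r (s (S n)) (s n)).
Proof.
  intros wf desc.
  destruct (wf_exists_min (fun x => exists n, s n = x) wf (ex_intro _ (s 0) (ex_intro _ 0 eq_refl)))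
    as [m [[n <-] m_min]].
  exact (m_min (s (S n)) (ex_intro _ (S n) eq_refl) (desc n)).
Qed.

Lemma well_founded_of_no_descending_seq :
  (forall s : nat -> T, ~ (forall n, r (s (S n)) (s n))) -> well_founded r.
Proof.
  intros no_desc a. apply NNPP; intro Ha.
  assert (step : forall x : {x | ~ Acc r x},
             exists y : {y | ~ Acc r y}, r (proj1_sig y) (proj1_sig x)).
  { intros [x Hx]. apply NNPP; intro Hn. apply Hx. constructor. intros y Hy.
    apply NNPP; intro Hy'. apply Hn. exists (exist _ y Hy'). exact Hy. }
  destruct (choice _ step) as [next next_lt].
  apply (no_desc (fun n => proj1_sig (Nat.iter n next (exist _ a Ha)))).
  intro n. apply next_lt.
Qed.

Lemma antichain_subseq (s : nat -> T) :
  well_founded r -> (forall i j, r (s i) (s j) -> j < i) ->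
  exists f : nat -> nat, (forall i j, i < j -> f i < f j) /\
    (forall i j, i <> j -> ~ r (s (f i)) (s (f j))).
Proof.
  intros wf backward.
  assert (tail_min : forall N, exists j, N <= j /\ forall k, N <= k -> ~ r (s k) (s j)).
  { intro N.
    destruct (wf_exists_min (fun x => exists k, N <= k /\ s k = x) wf) as [m [[j [Nj <-]] m_min]].
    - exists (s N), N. split; [apply le_n | reflexivity].
    - exists j. split; [exact Nj|]. intros k Nk. apply m_min. exists k. split; [exact Nk | reflexivity]. }
  destruct (choice _ tail_min) as [g g_min].
  (* f enumerates successive tail minima: f 0 = g 0 and f (S n) = g (S (f n)). *)
  pose (f := fun n => Nat.iter n (fun k => g (S k)) (g 0)).
  assert (f_min : forall j, exists N, N <= f j /\ forall k, N <= k -> ~ r (s k) (s (f j))).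
  { intros [|j]; [exists 0 | exists (S (f j))]; apply g_min. }
  assert (f_succ : forall n, f n < f (S n)) by (intro n; exact (proj1 (g_min (S (f n))))).
  assert (f_incr : forall i j, i < j -> f i < f j).
  { intros i j ij. induction ij as [|j _ IH]; [apply f_succ | specialize (f_succ j); lia]. }
  exists f. split; [exact f_incr|].
  intros i j ne. destruct (Nat.lt_total i j) as [ij|[<-|ji]]; [| contradiction |].
  - intro H. apply backward in H. specialize (f_incr i j ij). lia.
  - destruct (f_min j) as [N [N_le N_min]]. apply N_min. specialize (f_incr j i ji). lia.
Qed.

End WellFounded.

Section WellOrder.

Variables (T : Type) (r : T -> T -> Prop).
Hypothesis wo : well_order r.

Lemma wo_lt_le_trans (a b c : T) : r a b -> ~ r c b -> r a c.
Proof.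
  destruct wo as [_ [tr [tri _]]]. intros ab cb.
  destruct (tri b c) as [bc|[<-|cb']]; [exact (tr _ _ _ ab bc) | exact ab | contradiction].
Qed.

Lemma wo_le_lt_trans (a b c : T) : ~ r b a -> r b c -> r a c.
Proof.
  destruct wo as [_ [tr [tri _]]]. intros ba bc.
  destruct (tri a b) as [ab|[<-|ba']]; [exact (tr _ _ _ ab bc) | exact bc | contradiction].
Qed.

Lemma wo_least (P : T -> Prop) : (exists x, P x) -> {m | P m /\ forall y, P y -> ~ r y m}.
Proof.
  intro ex. apply constructive_indefinite_description.
  exact (wf_exists_min T r P (proj2 (proj2 (proj2 wo))) ex).
Qed.

End WellOrder.

Section IncreasingMap.

Variables (A B : Type) (rA : A -> A -> Prop) (rB : B -> B -> Prop).
Hypotheses (wA : well_order rA) (wB : well_order rB).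
Variable h : A -> B.
Hypothesis h_incr : forall a a', rA a a' -> rB (h a) (h a').

Definition strict_ub (a : A) (g : forall a', rA a' a -> B) (b : B) : Prop :=
  forall a' (H : rA a' a), rB (g a' H) b.

(* [h a] is a junk value: along [seg_map] a strict upper bound always exists. *)
Definition seg_step (a : A) (g : forall a', rA a' a -> B) : B :=
  match excluded_middle_informative (exists b, strict_ub a g b) with
  | left ex => proj1_sig (wo_least B rB wB _ ex)
  | right _ => h a
  end.

Lemma seg_step_spec (a : A) (g : forall a', rA a' a -> B) :
  (exists b, strict_ub a g b) ->
  strict_ub a g (seg_step a g) /\ forall b, strict_ub a g b -> ~ rB b (seg_step a g).
Proof.
  intro ex. unfold seg_step.
  destruct (excluded_middle_informative _) as [ex'|no]; [|contradiction].
  destruct (wo_least _ _ _ _ ex') as [m Hm]. exact Hm.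
Qed.

Definition seg_map : A -> B := Fix (proj2 (proj2 (proj2 wA))) (fun _ => B) seg_step.

Lemma seg_map_eq (a : A) : seg_map a = seg_step a (fun a' _ => seg_map a').
Proof.
  unfold seg_map. refine (Fix_eq _ (fun _ => B) seg_step _ a). intros x g1 g2 Hg.
  replace g2 with g1; [reflexivity|].
  apply functional_extensionality_dep; intro y.
  apply functional_extensionality_dep; intro p. apply Hg.
Qed.

Lemma seg_map_spec (a : A) :
  ~ rB (h a) (seg_map a) /\
  (forall a', rA a' a -> rB (seg_map a') (seg_map a)) /\
  (forall b, (forall a', rA a' a -> rB (seg_map a') b) -> ~ rB b (seg_map a)).
Proof.
  induction (proj2 (proj2 (proj2 wA)) a) as [a _ IH].
  assert (h_ub : strict_ub a (fun a' _ => seg_map a') (h a)).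
  { intros a' H. apply (wo_le_lt_trans B rB wB _ (h a')).
    - exact (proj1 (IH a' H)).
    - exact (h_incr _ _ H). }
  destruct (seg_step_spec a _ (ex_intro _ _ h_ub)) as [ub least].
  rewrite (seg_map_eq a). split; [|split].
  - exact (least _ h_ub).
  - exact ub.
  - intros b Hb. exact (least b Hb).
Qed.

Lemma seg_map_initial (a : A) (b : B) : rB b (seg_map a) -> exists a', seg_map a' = b.
Proof.
  induction (proj2 (proj2 (proj2 wA)) a) as [a _ IH]. intro ba.
  destruct (classic (forall a', rA a' a -> rB (seg_map a') b)) as [ub|not_ub].
  - exfalso. exact (proj2 (proj2 (seg_map_spec a)) b ub ba).
  - apply not_all_ex_not in not_ub as [a' Ha']. apply imply_to_and in Ha' as [a'a not_lt].
    pose proof wB as [_ [_ [tri _]]].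
    destruct (tri b (seg_map a')) as [b_lt|[E|b_gt]].
    + exact (IH a' a'a b_lt).
    + exists a'. symmetry. exact E.
    + contradiction.
Qed.

Lemma ord_le_of_increasing : ord_le rA rB.
Proof.
  exists seg_map. split; [|exact seg_map_initial].
  pose proof wA as [_ [_ [triA _]]]. pose proof wB as [irB [trB _]].
  intros a a'. split; [exact (proj1 (proj2 (seg_map_spec a')) a)|].
  intro H. destruct (triA a a') as [aa'|[<-|a'a]]; [exact aa' | exfalso..].
  - exact (irB _ H).
  - apply (irB (seg_map a)). exact (trB _ _ _ H (proj1 (proj2 (seg_map_spec a)) a' a'a)).
Qed.

End IncreasingMap.

Lemma embeds_trans {A B C : Type}
  (rA : A -> A -> Prop) (rB : B -> B -> Prop) (rC : C -> C -> Prop) :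
  embeds rA rB -> embeds rB rC -> embeds rA rC.
Proof.
  intros [f [f_inj f_iff]] [g [g_inj g_iff]]. exists (fun x => g (f x)). split.
  - intros x y E. exact (f_inj _ _ (g_inj _ _ E)).
  - intros x y. rewrite f_iff. apply g_iff.
Qed.

Lemma tame_of_embeds {X Y : Type} (ltX : X -> X -> Prop) (ltY : Y -> Y -> Prop) :
  embeds ltX ltY -> tame ltY -> tame ltX.
Proof.
  intros e [noR22 noS]. split; intro H; [apply noR22 | apply noS]; exact (embeds_trans _ _ _ H e).
Qed.

Lemma embedding_of_reduced {A T : Type} (rA : A -> A -> Prop) (rT : T -> T -> Prop) (F : A -> T) :
  reduced rA -> (forall p q, rA p q <-> rT (F p) (F q)) -> embedding rA rT F.
Proof.
  intros red F_iff. split; [|exact F_iff].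
  intros p q E. apply red; intro r; rewrite !F_iff, E; reflexivity.
Qed.

Lemma R22_reduced : reduced R22_lt.
Proof.
  intros [[|] [|]] [[|] [|]] below above; try reflexivity; exfalso;
  pose proof (above (true,true)); pose proof (above (true,false));
  pose proof (below (false,true)); pose proof (below (false,false));
  clear above below; unfold R22_lt in *; simpl in *; intuition discriminate.
Qed.

Lemma Somega2_reduced : reduced Somega2_lt.
Proof.
  unfold Somega2_lt.
  intros [[|] m] [[|] n] below above; cbn in *.
  - destruct (proj1 (below (false,m)) (conj eq_refl (conj eq_refl (le_n m)))) as (_ & _ & nm).
    destruct (proj2 (below (false,n)) (conj eq_refl (conj eq_refl (le_n n)))) as (_ & _ & mn).
    cbn in *. f_equal. lia.
  - destruct (proj1 (below (false,m)) (conj eq_refl (conj eq_refl (le_n m)))) as (_ & E & _).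
    discriminate.
  - destruct (proj2 (below (false,n)) (conj eq_refl (conj eq_refl (le_n n)))) as (_ & E & _).
    discriminate.
  - destruct (proj1 (above (true,m)) (conj eq_refl (conj eq_refl (le_n m)))) as (_ & _ & mn).
    destruct (proj2 (above (true,n)) (conj eq_refl (conj eq_refl (le_n n)))) as (_ & _ & nm).
    cbn in *. f_equal. lia.
Qed.

Section RLambda.

Variables (W : Type) (ltW : W -> W -> Prop).
Hypothesis wo : well_order ltW.

Lemma Rl_no_R22 : ~ embeds R22_lt (Rl_lt ltW).
Proof.
  intros [e [_ e_iff]].
  assert (x0y0 : Rl_lt ltW (e (false,false)) (e (true,false))) by (apply e_iff; repeat split).
  assert (x1y1 : Rl_lt ltW (e (false,true)) (e (true,true))) by (apply e_iff; repeat split).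
  assert (x0y1 : ~ Rl_lt ltW (e (false,false)) (e (true,true)))
    by (intro H; apply e_iff in H as (_ & _ & H); discriminate).
  assert (x1y0 : ~ Rl_lt ltW (e (false,true)) (e (true,false)))
    by (intro H; apply e_iff in H as (_ & _ & H); discriminate).
  unfold Rl_lt in *. pose proof wo as [irr [tr _]].
  apply (irr (snd (proj1_sig (e (false,false))))).
  exact (tr _ _ _ (wo_lt_le_trans _ _ wo _ _ _ x0y0 x1y0) (wo_lt_le_trans _ _ wo _ _ _ x1y1 x0y1)).
Qed.

Lemma Rl_no_Somega2 : ~ embeds Somega2_lt (Rl_lt ltW).
Proof.
  intros [e [_ e_iff]].
  apply (wf_no_descending_seq _ ltW (fun n => snd (proj1_sig (e (false,n)))) (proj2 (proj2 (proj2 wo)))).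
  intro n.
  assert (x_lt_y : Rl_lt ltW (e (false, S n)) (e (true, S n))) by (apply e_iff; repeat split; apply le_n).
  assert (x_nlt_y : ~ Rl_lt ltW (e (false, n)) (e (true, S n)))
    by (intro H; apply e_iff in H as (_ & _ & H); cbn in H; lia).
  exact (wo_lt_le_trans _ _ wo _ _ _ x_lt_y x_nlt_y).
Qed.

Lemma Rl_tame : tame (Rl_lt ltW).
Proof. split; [exact Rl_no_R22 | exact Rl_no_Somega2]. Qed.

End RLambda.

Section TameOrder.

Variables (X : Type) (lt : X -> X -> Prop).
Hypotheses (so : strict_order lt) (wf : well_founded lt).

Definition up_incl (x y : X) : Prop := forall z, lt x z -> lt y z.

Lemma up_incl_total : ~ embeds R22_lt lt -> forall x y, up_incl x y \/ up_incl y x.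
Proof.
  pose proof so as [irr tr].
  intros noR22 a b. apply NNPP; intro Hn. apply not_or_and in Hn as [ab ba].
  apply not_all_ex_not in ab as [c Hc]. apply imply_to_and in Hc as [ac nbc].
  apply not_all_ex_not in ba as [d Hd]. apply imply_to_and in Hd as [bd nad].
  assert (Nab : ~ lt a b) by (intro H; apply nad; eapply tr; eauto).
  assert (Nba : ~ lt b a) by (intro H; apply nbc; eapply tr; eauto).
  assert (Ncd : ~ lt c d) by (intro H; apply nad; eapply tr; eauto).
  assert (Ndc : ~ lt d c) by (intro H; apply nbc; eapply tr; eauto).
  assert (Nca : ~ lt c a) by (intro H; apply (irr a); eapply tr; eauto).
  assert (Ndb : ~ lt d b) by (intro H; apply (irr b); eapply tr; eauto).
  assert (Ncb : ~ lt c b) by (intro H; apply nad; eapply tr; [exact ac|]; eapply tr; eauto).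
  assert (Nda : ~ lt d a) by (intro H; apply nbc; eapply tr; [exact bd|]; eapply tr; eauto).
  apply noR22. exists (fun p : bool * bool => match p with
    | (false,false) => a | (true,false) => c | (false,true) => b | (true,true) => d end).
  apply embedding_of_reduced; [exact R22_reduced|].
  intros [[|] [|]] [[|] [|]]; unfold R22_lt; simpl; split; intro H;
  first [ contradiction | exfalso; apply (irr _ H) | (destruct H as (? & ? & ?); discriminate)
        | assumption | (repeat split; reflexivity) ].
Qed.

Definition up_chain (c : nat -> X) : Prop :=
  (forall n, up_incl (c n) (c (S n))) /\ (forall n, exists z, lt (c (S n)) z /\ ~ lt (c n) z).

Section UpChain.

Variable c : nat -> X.
Hypothesis c_chain : up_chain c.

Lemma up_chain_incl (i j : nat) : i <= j -> up_incl (c i) (c j).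
Proof.
  intro ij. induction ij as [|j _ IH]; intros z H; [exact H | exact (proj1 c_chain j z (IH z H))].
Qed.

Lemma up_chain_strict (i j : nat) : i < j -> exists z, lt (c j) z /\ ~ lt (c i) z.
Proof.
  intro ij. destruct j as [|j]; [lia|].
  destruct (proj2 c_chain j) as [z [jz njz]]. exists z. split; [exact jz|].
  intro iz. apply njz. exact (up_chain_incl i j ltac:(lia) z iz).
Qed.

Lemma up_chain_backward (i j : nat) : lt (c i) (c j) -> j < i.
Proof.
  pose proof so as [irr tr]. intro H.
  destruct (Nat.lt_total i j) as [ij|[<-|ji]]; [exfalso | exfalso; exact (irr _ H) | exact ji].
  destruct (up_chain_strict i j ij) as [z [jz niz]]. exact (niz (tr _ _ _ H jz)).
Qed.

Lemma up_chain_subseq (f : nat -> nat) :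
  (forall i j, i < j -> f i < f j) -> up_chain (fun n => c (f n)).
Proof.
  intro f_incr. split; intro n.
  - apply up_chain_incl. apply Nat.lt_le_incl, f_incr. lia.
  - apply up_chain_strict, f_incr. lia.
Qed.

End UpChain.

Lemma embeds_Somega2 (x y : nat -> X) :
  (forall m n, lt (x m) (y n) <-> n <= m) ->
  (forall m m', ~ lt (x m) (x m')) -> (forall n n', ~ lt (y n) (y n')) ->
  (forall n m, ~ lt (y n) (x m)) -> embeds Somega2_lt lt.
Proof.
  intros xy xx yy yx.
  exists (fun p : bool * nat => if fst p then y (snd p) else x (snd p)).
  apply embedding_of_reduced; [exact Somega2_reduced|].
  intros [[|] m] [[|] n]; unfold Somega2_lt; cbn; split.
  - intros (E & _); discriminate.
  - intro H. destruct (yy m n H).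
  - intros (E & _); discriminate.
  - intro H. destruct (yx m n H).
  - intros (_ & _ & nm). apply xy, nm.
  - intro H. repeat split. apply xy, H.
  - intros (_ & E & _); discriminate.
  - intro H. destruct (xx m n H).
Qed.

Lemma up_chain_Somega2 (c : nat -> X) : up_chain c -> embeds Somega2_lt lt.
Proof.
  intro c_chain. pose proof so as [irr tr].
  destruct (antichain_subseq X lt c wf (up_chain_backward c c_chain)) as [f [f_incr f_anti]].
  pose (z := fun n => c (f n)).
  assert (z_chain : up_chain z) by exact (up_chain_subseq c c_chain f f_incr).
  destruct (choice _ (proj2 z_chain)) as [y y_sep].
  assert (y_backward : forall i j, lt (y i) (y j) -> j < i).
  { intros i j H. destruct (Nat.lt_total i j) as [ij|[<-|ji]];
      [exfalso | exfalso; exact (irr _ H) | exact ji].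
    apply (proj2 (y_sep j)), (up_chain_incl z z_chain (S i) j ij).
    exact (tr _ _ _ (proj1 (y_sep i)) H). }
  destruct (antichain_subseq X lt y wf y_backward) as [g [g_incr g_anti]].
  assert (g_le : forall i j, i <= j -> g i <= g j).
  { intros i j ij. destruct (Nat.eq_dec i j) as [<-|ne]; [lia|].
    apply Nat.lt_le_incl, g_incr. lia. }
  assert (g_inj : forall i j, i <> j -> g i <> g j).
  { intros i j ne. destruct (Nat.lt_total i j) as [ij|[<-|ji]];
      [apply g_incr in ij | contradiction | apply g_incr in ji]; lia. }
  apply (embeds_Somega2 (fun m => z (S (g m))) (fun n => y (g n))).
  - intros m n. split; intro H.
    + destruct (le_lt_dec n m) as [nm|mn]; [exact nm | exfalso].
      apply (proj2 (y_sep (g n))), (up_chain_incl z z_chain (S (g m)) (g n)); [|exact H].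
      apply g_incr in mn. lia.
    + apply (up_chain_incl z z_chain (S (g n)) (S (g m))); [apply g_le in H; lia|].
      exact (proj1 (y_sep (g n))).
  - intros m m' H. destruct (Nat.eq_dec m m') as [<-|ne]; [exact (irr _ H)|].
    apply (f_anti (S (g m)) (S (g m'))); [|exact H].
    specialize (g_inj m m' ne). lia.
  - intros n n' H. destruct (Nat.eq_dec n n') as [<-|ne]; [exact (irr _ H) | exact (g_anti n n' ne H)].
  - intros n m H.
    assert (H' := tr _ _ _ (proj1 (y_sep (g n))) H).
    destruct (Nat.eq_dec (S (g n)) (S (g m))) as [E|ne].
    + rewrite E in H'. exact (irr _ H').
    + exact (f_anti _ _ ne H').
Qed.

End TameOrder.

Section CURank.

Variables (X : Type) (lt : X -> X -> Prop).

Lemma CU_ext (A B : CU lt) : (forall z, proj1_sig A z <-> proj1_sig B z) -> A = B.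
Proof.
  destruct A as [a Ha], B as [b Hb]. cbn. intro H.
  assert (a = b) as <-.
  { apply functional_extensionality; intro z. apply propositional_extensionality, H. }
  f_equal. apply proof_irrelevance.
Qed.

Definition cu_elt (x : X) : CU lt := exist _ (cu lt x) (ex_intro _ x eq_refl).

Definition CU_rep (A : CU lt) : X :=
  proj1_sig (constructive_indefinite_description _ (proj2_sig A)).

Lemma cu_elt_rep (A : CU lt) : cu_elt (CU_rep A) = A.
Proof.
  apply CU_ext. unfold CU_rep.
  destruct (constructive_indefinite_description _ _) as [x Hx]. cbn. rewrite Hx. reflexivity.
Qed.

Lemma CU_rep_inj (A B : CU lt) : CU_rep A = CU_rep B -> A = B.
Proof. intro E. rewrite <- (cu_elt_rep A), <- (cu_elt_rep B), E. reflexivity. Qed.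

Lemma cu_incl_iff (x y : X) : (forall z, cu lt x z -> cu lt y z) <-> up_incl X lt y x.
Proof.
  unfold cu, up_incl. split; intros H z.
  - intro yz. apply NNPP; intro nxz. exact (H z nxz yz).
  - intros nxz yz. exact (nxz (H z yz)).
Qed.

Lemma CU_lt_cu_elt (x y : X) :
  CU_lt lt (cu_elt x) (cu_elt y) <-> up_incl X lt y x /\ ~ up_incl X lt x y.
Proof. unfold CU_lt. cbn. rewrite !cu_incl_iff. reflexivity. Qed.

Lemma cu_elt_eq (x y : X) : up_incl X lt x y -> up_incl X lt y x -> cu_elt x = cu_elt y.
Proof.
  intros xy yx. apply CU_ext. intro z.
  split; [exact (proj2 (cu_incl_iff x y) yx z) | exact (proj2 (cu_incl_iff y x) xy z)].
Qed.

Hypotheses (so : strict_order lt) (wf : well_founded lt) (tm : tame lt).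

Lemma CU_well_order : well_order (CU_lt lt).
Proof.
  assert (CU_cases : forall x y, up_incl X lt y x ->
            CU_lt lt (cu_elt x) (cu_elt y) \/ cu_elt x = cu_elt y).
  { intros x y yx. destruct (classic (up_incl X lt x y)) as [xy|nxy].
    - right. exact (cu_elt_eq x y xy yx).
    - left. apply CU_lt_cu_elt. split; assumption. }
  split; [|split; [|split]].
  - intros A [AB BA]. exact (BA AB).
  - intros A B C [AB BA] [BC CB]. split; [intros z Az; exact (BC z (AB z Az))|].
    intro CA. apply CB. intros z Cz. exact (AB z (CA z Cz)).
  - intros A B. rewrite <- (cu_elt_rep A), <- (cu_elt_rep B).
    destruct (up_incl_total X lt so (proj1 tm) (CU_rep A) (CU_rep B)) as [AB|BA].
    + destruct (CU_cases (CU_rep B) (CU_rep A) AB); auto.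
    + destruct (CU_cases (CU_rep A) (CU_rep B) BA); auto.
  - apply well_founded_of_no_descending_seq. intros s desc.
    apply (proj2 tm), (up_chain_Somega2 X lt so wf (fun n => CU_rep (s n))).
    assert (step : forall n, up_incl X lt (CU_rep (s n)) (CU_rep (s (S n))) /\
                             ~ up_incl X lt (CU_rep (s (S n))) (CU_rep (s n))).
    { intro n. apply CU_lt_cu_elt. rewrite !cu_elt_rep. exact (desc n). }
    split; intro n; [exact (proj1 (step n))|].
    destruct (not_all_ex_not _ _ (proj2 (step n))) as [z Hz]. apply imply_to_and in Hz as [Sz nz].
    exists z. split; assumption.
Qed.

Definition CU_first (y : X) : CU lt :=
  proj1_sig (wo_least _ (CU_lt lt) CU_well_order (fun C => proj1_sig C y)
               (ex_intro _ (cu_elt y) (proj1 so y))).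

Lemma CU_first_spec (y : X) :
  proj1_sig (CU_first y) y /\ forall D, proj1_sig D y -> ~ CU_lt lt D (CU_first y).
Proof. unfold CU_first. destruct (wo_least _ _ _ _ _) as [C HC]. exact HC. Qed.

Lemma lt_iff_CU_first (x y : X) : lt x y <-> CU_lt lt (cu_elt x) (CU_first y).
Proof.
  destruct (CU_first_spec y) as [y_first first_min]. split.
  - intro xy. pose proof CU_well_order as [_ [_ [tri _]]].
    destruct (tri (cu_elt x) (CU_first y)) as [lt_xy|[E|[first_x _]]]; [exact lt_xy|exfalso..].
    + rewrite <- E in y_first. exact (y_first xy).
    + exact (first_x y y_first xy).
  - intro H. apply NNPP; intro nxy. exact (first_min (cu_elt x) nxy H).
Qed.

Lemma CU_embedding : reduced lt -> embeds lt (Rl_lt (CU_lt lt)).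
Proof.
  intro red.
  assert (first_le : forall y, ~ CU_lt lt (snd (CU_first y, cu_elt y)) (fst (CU_first y, cu_elt y)))
    by (intro y; exact (proj2 (CU_first_spec y) (cu_elt y) (proj1 so y))).
  exists (fun y => exist _ (CU_first y, cu_elt y) (first_le y)).
  apply embedding_of_reduced; [exact red|]. exact lt_iff_CU_first.
Qed.

Lemma CU_ord_le (W : Type) (ltW : W -> W -> Prop) :
  well_order ltW -> embeds lt (Rl_lt ltW) -> ord_le (CU_lt lt) ltW.
Proof.
  intros wo [e [_ e_iff]].
  assert (incr : forall x y, CU_lt lt (cu_elt x) (cu_elt y) ->
                   ltW (snd (proj1_sig (e x))) (snd (proj1_sig (e y)))).
  { intros x y [_ nxy]%CU_lt_cu_elt.
    apply not_all_ex_not in nxy as [z Hz]. apply imply_to_and in Hz as [xz nyz].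
    apply (wo_lt_le_trans _ _ wo _ (fst (proj1_sig (e z)))).
    - exact (proj1 (e_iff x z) xz).
    - intro H. exact (nyz (proj2 (e_iff y z) H)). }
  apply (ord_le_of_increasing _ _ _ _ CU_well_order wo (fun A => snd (proj1_sig (e (CU_rep A))))).
  intros A B AB. apply incr. rewrite !cu_elt_rep. exact AB.
Qed.

End CURank.

Theorem proposition2p10 (S : Type) (lt : S -> S -> Prop) :
  strict_order lt -> well_founded lt -> reduced lt ->
  (tame lt <->
     exists (W : Type) (ltW : W -> W -> Prop), well_order ltW /\ embeds lt (Rl_lt ltW)) /\
  (tame lt ->
     well_order (CU_lt lt) /\
     embeds lt (Rl_lt (CU_lt lt)) /\
     (forall (W : Type) (ltW : W -> W -> Prop),
        well_order ltW -> embeds lt (Rl_lt ltW) -> ord_le (CU_lt lt) ltW) /\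
     (exists g : CU lt -> S, forall A B, g A = g B -> A = B)).
Proof.
  intros so wf red. split; [split|].
  - intro tm. exists (CU lt), (CU_lt lt).
    exact (conj (CU_well_order _ _ so wf tm) (CU_embedding _ _ so wf tm red)).
  - intros (W & ltW & wo & e). exact (tame_of_embeds _ _ e (Rl_tame W ltW wo)).
  - intro tm. split; [|split; [|split]].
    + exact (CU_well_order _ _ so wf tm).
    + exact (CU_embedding _ _ so wf tm red).
    + exact (CU_ord_le _ _ so wf tm).
    + exists (CU_rep _ lt). exact (CU_rep_inj _ lt).
Qed.
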